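(* Every (fork, co-cricket)-free graph $G$ satisfies $\chi(G)\le\omega(G)^2$.
   Context: All graphs are finite and simple; $\chi$ is chromatic number, $\omega$ clique number. The fork is obtained from $K_{1,3}$ by subdividing one edge once. The co-cricket is the disjoint union of a diamond ($K_4$ minus an edge) and an isolated vertex. $G$ is $(H_1,H_2)$-free if it has no induced subgraph isomorphic to $H_1$ or $H_2$. *)

From mathcomp Require Import all_boot.
Set Implicit Arguments. Unset Strict Implicit. Unset Printing Implicit Defensive.

Definition simple_graph (T : finType) (e : rel T) : Prop :=
  symmetric e /\ irreflexive e.

Definition induces (T : finType) (e : rel T) (k : nat) (h : rel 'I_k) : Prop :=
  exists f : 'I_k -> T, injective f /\ forall i j, e (f i) (f j) = h i j.

Definition rel_of_edges (n : nat) (E : seq (nat * nat)) : rel 'I_n :=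
  fun i j => ((nat_of_ord i, nat_of_ord j) \in E) || ((nat_of_ord j, nat_of_ord i) \in E).

(* Fork: K_{1,3} with centre 0, leaves 1,2,3, edge 0-3 subdivided by 4. *)
Definition fork : rel 'I_5 :=
  @rel_of_edges 5 [:: (0,1); (0,2); (0,4); (4,3)].

(* Co-cricket: diamond on {0,1,2,3} (K4 minus edge 2-3) plus isolated vertex 4. *)
Definition cocricket : rel 'I_5 :=
  @rel_of_edges 5 [:: (0,1); (0,2); (0,3); (1,2); (1,3)].

Definition free_of (T : finType) (e : rel T) (k : nat) (h : rel 'I_k) : Prop :=
  ~ induces e h.

Definition is_clique (T : finType) (e : rel T) (K : {set T}) : bool :=
  [forall x in K, forall y in K, (x != y) ==> e x y].

Definition clique_number (T : finType) (e : rel T) : nat :=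
  \max_(K : {set T} | is_clique e K) #|K|.

Definition proper_colouring (T : finType) (e : rel T) (k : nat) (c : T -> 'I_k) : Prop :=
  forall x y, e x y -> c x != c y.

Definition colourable (T : finType) (e : rel T) (k : nat) : Prop :=
  exists c : T -> 'I_k, proper_colouring e c.

(* chromatic number chi(G): least k with a proper k-colouring
   (exists since #|T| colours always suffice for a loopless graph). *)
Definition is_chromatic_number (T : finType) (e : rel T) (k : nat) : Prop :=
  colourable e k /\ forall j, colourable e j -> k <= j.

From mathcomp Require Import all_boot zify.
Set Implicit Arguments.
Unset Strict Implicit.
Unset Printing Implicit Defensive.

(* We prove, by induction on w, that a vertex set S of such a graph whose
   cliques have at most w vertices has a proper colouring with w^2 colours.
   Pick a vertex a of S.  Its neighbourhood has cliques of size at most w - 1,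
   so it takes (w - 1)^2 colours.  Its non-neighbours, together with a, need
   only 2w - 1 further colours: being anticomplete to a, they induce a
   diamond-free graph (a diamond plus a is a co-cricket), and a fork-free,
   diamond-free graph with cliques of size at most w is (2w - 1)-colourable.
   The latter is shown by induction on the number of vertices: a vertex of
   degree at most 2w - 2 is coloured greedily; otherwise diamond- and
   fork-freeness forbid triangles, and then fork-freeness makes the component
   of any vertex of degree at least 3 bipartite (its layers at distance
   0, 1, 2, 3 exhaust it and alternate), so that component is split off. *)

Section Graph.

Variables (T : finType) (e : rel T).
Hypothesis e_sym : symmetric e.
Hypothesis e_irr : irreflexive e.

Definition nbhd (S : {set T}) (v : T) : {set T} := [set y in S | e v y].

Lemma in_nbhd (S : {set T}) v y : (y \in nbhd S v) = (y \in S) && e v y.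
Proof. by rewrite inE. Qed.

Definition colourable_on (S : {set T}) (k : nat) : Prop :=
  exists c : T -> nat,
    {in S, forall x, c x < k} /\ {in S &, forall x y, e x y -> c x != c y}.

Definition independent (P : {set T}) : Prop := {in P &, forall p q, ~~ e p q}.

Definition closed_in (S X : {set T}) : Prop :=
  forall p q, p \in X -> q \in S -> e p q -> q \in X.

Lemma colourable_on0 k : colourable_on set0 k.
Proof. by exists (fun _ => 0); split=> x; rewrite inE. Qed.

Lemma colourable_on_sub (S S' : {set T}) k k' :
  S' \subset S -> k <= k' -> colourable_on S k -> colourable_on S' k'.
Proof.
move=> /subsetP sS kk' [c [cS cP]]; exists c; split.
  by move=> x /sS /cS /leq_trans; apply.
by move=> x y /sS xS /sS yS; apply: cP.
Qed.

(* Disjoint palettes: colours of S2 are shifted by k1. *)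
Lemma colourable_on_union (S1 S2 : {set T}) k1 k2 :
  colourable_on S1 k1 -> colourable_on S2 k2 ->
  colourable_on (S1 :|: S2) (k1 + k2).
Proof.
move=> [c1 [c1S c1P]] [c2 [c2S c2P]].
exists (fun x => if x \in S1 then c1 x else k1 + c2 x); split.
  move=> x; rewrite inE; case: ifP => [/c1S lt _|_ /= /c2S].
    exact: leq_trans lt (leq_addr _ _).
  by rewrite ltn_add2l.
have c1_lt x n : x \in S1 -> (c1 x == k1 + n) = false.
  by move=> /c1S lt; apply/negbTE; rewrite neq_ltn (leq_trans lt) ?leq_addr.
move=> x y; rewrite !inE; case: ifP => xS1; case: ifP => yS1 /= xS yS exy.
- exact: c1P.
- by rewrite c1_lt.
- by rewrite eq_sym c1_lt.
- by rewrite eqn_add2l c2P.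
Qed.

Lemma colourable_on_split (S X : {set T}) k :
  closed_in S X -> colourable_on X k -> colourable_on (S :\: X) k ->
  colourable_on S k.
Proof.
move=> closedX [c1 [c1S c1P]] [c2 [c2S c2P]].
have cut p q : p \in X -> q \in S -> q \notin X -> ~~ e p q.
  by move=> pX qS qX; apply/negP => /(closedX p q pX qS); apply/negP.
exists (fun x => if x \in X then c1 x else c2 x); split.
  by move=> x xS; case: ifP => xX; [apply: c1S | apply: c2S; rewrite inE xX].
move=> x y xS yS exy; case: ifP => xX; case: ifP => yX.
- exact: c1P.
- by move: (cut x y xX yS (negbT yX)); rewrite exy.
- by move: (cut y x yX xS (negbT xX)); rewrite e_sym exy.
- by apply: c2P; rewrite // inE ?xX ?yX.
Qed.

Lemma colourable_on_greedy (S : {set T}) v k :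
  v \in S -> #|nbhd S v| < k -> colourable_on (S :\ v) k -> colourable_on S k.
Proof.
move=> vS small [c [cS cP]].
set used := [seq c y | y in nbhd S v].
have [n nk nfree] : exists2 n, n < k & n \notin used.
  have /hasP [n] : has (predC (mem used)) (iota 0 k).
    apply/negPn/negP => /hasPn full.
    have sub : {subset iota 0 k <= used} by move=> m /full /negPn.
    have := uniq_leq_size (iota_uniq 0 k) sub.
    by rewrite size_iota size_map -cardE leqNgt small.
  by rewrite mem_iota => /andP [_ nk] nfree; exists n.
have c_used y : y \in S -> e v y -> c y \in used.
  by move=> yS vy; apply: map_f; rewrite mem_enum in_nbhd yS.
exists (fun x => if x == v then n else c x); split.
  by move=> x xS; case: ifP => // /negbT xv; apply: cS; rewrite !inE xv.
move=> x y xS yS exy.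
case: ifP => [/eqP xv|/negbT xv]; case: ifP => [/eqP yv|/negbT yv].
- by move: exy; rewrite xv yv e_irr.
- by apply: contra nfree => /eqP ->; rewrite c_used // -xv.
- by apply: contra nfree => /eqP <-; rewrite c_used // -yv e_sym.
- by apply: cP; rewrite // !inE ?xv ?yv.
Qed.

Lemma colourable_on_bipartite (P Q : {set T}) :
  independent P -> independent Q -> colourable_on (P :|: Q) 2.
Proof.
move=> indP indQ; exists (fun x => if x \in P then 0 else 1); split.
  by move=> x _; case: ifP.
move=> x y; rewrite !inE; case: ifP => xP; case: ifP => yP //= xQ yQ exy.
- by move: (indP x y xP yP); rewrite exy.
- by move: (indQ x y xQ yQ); rewrite exy.
Qed.

Definition clique_bound (S : {set T}) (w : nat) : Prop :=
  forall K : {set T}, K \subset S -> is_clique e K -> #|K| <= w.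

Lemma clique_bound_sub (S S' : {set T}) w :
  S' \subset S -> clique_bound S w -> clique_bound S' w.
Proof. by move=> sS bS K KS'; apply: bS; apply: subset_trans sS. Qed.

Lemma clique_bound_number : clique_bound [set: T] (clique_number e).
Proof.
by move=> K _ cK; apply: (@leq_bigmax_cond _ _ (fun K : {set T} => #|K|) _ cK).
Qed.

Lemma clique1 y : is_clique e [set y].
Proof.
apply/forall_inP => u /set1P ->.
by apply/forall_inP => v /set1P ->; rewrite eqxx.
Qed.

Lemma clique_bound0 (S : {set T}) : clique_bound S 0 -> S = set0.
Proof.
move=> bS; apply/setP => x; rewrite inE; apply/negP => xS.
by have := bS _ _ (clique1 x); rewrite cards1 sub1set => /(_ xS).
Qed.

Lemma is_clique_setU1 (K : {set T}) a :
  is_clique e K -> {in K, forall y, e a y} -> is_clique e (a |: K).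
Proof.
move=> /forall_inP cK aK; apply/forall_inP => u; rewrite in_setU1.
case/orP => [/eqP ->|uK]; apply/forall_inP => v; rewrite in_setU1.
- by case/orP => [/eqP ->|/aK ->]; rewrite ?eqxx ?implybT.
- case/orP => [/eqP ->|vK]; first by rewrite e_sym aK ?implybT.
  by have /forall_inP := cK u uK; apply.
Qed.

Lemma card_setU1_nbr (K : {set T}) a :
  {in K, forall y, e a y} -> #|a |: K| = #|K|.+1.
Proof.
by move=> aK; rewrite cardsU1; case: (boolP (a \in K)) => // /aK; rewrite e_irr.
Qed.

Lemma nbhd_clique_bound (S K : {set T}) w a :
  clique_bound S w.+1 -> a \in S -> K \subset nbhd S a -> is_clique e K ->
  #|K| <= w.
Proof.
move=> bS aS /subsetP KN cK.
have aK : {in K, forall y, e a y} by move=> y /KN; rewrite in_nbhd => /andP [].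
rewrite -ltnS -(card_setU1_nbr aK); apply: bS (is_clique_setU1 cK aK).
apply/subsetP => y; rewrite in_setU1 => /orP [/eqP -> //|/KN].
by rewrite in_nbhd => /andP [].
Qed.

Lemma not_clique_pair (K : {set T}) :
  ~~ is_clique e K ->
  exists s1 s2, [/\ s1 \in K, s2 \in K, s1 != s2 & ~~ e s1 s2].
Proof.
case/forall_inPn => s1 s1K /forall_inPn [s2 s2K].
by rewrite negb_imply => /andP [ne ns]; exists s1, s2.
Qed.

Definition fork_free : Prop := forall x0 x1 x2 x3 x4 : T,
  x1 != x2 -> e x0 x1 -> e x0 x2 -> e x0 x4 -> e x4 x3 ->
  ~~ e x1 x2 -> ~~ e x1 x3 -> ~~ e x1 x4 -> ~~ e x2 x3 -> ~~ e x2 x4 ->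
  ~~ e x0 x3 -> False.

Definition cocricket_free : Prop := forall a b c d z : T,
  c != d -> e a b -> e a c -> e a d -> e b c -> e b d -> ~~ e c d ->
  ~~ e z a -> ~~ e z b -> ~~ e z c -> ~~ e z d -> False.

(* A map realising the adjacency pattern h is injective, except possibly on
   pairs of twins of h, which must be checked separately. *)
Lemma pattern_injective k (h : rel 'I_k) (f : 'I_k -> T) :
  (forall i j, e (f i) (f j) = h i j) ->
  (forall i j, i != j -> (forall t, h i t = h j t) -> f i != f j) ->
  injective f.
Proof.
move=> adj twins i j fij; apply/eqP; apply/negPn/negP => ij.
case: (boolP [forall t, h i t == h j t]) => [/forallP rows|/forallPn [t]].
  by have := twins i j ij (fun t => eqP (rows t)); rewrite fij eqxx.
by rewrite -!adj fij eqxx.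
Qed.

Definition map5 (x0 x1 x2 x3 x4 : T) (i : 'I_5) : T :=
  match val i with 0 => x0 | 1 => x1 | 2 => x2 | 3 => x3 | _ => x4 end.

Lemma fork_free_of : free_of e fork -> fork_free.
Proof.
move=> ffree x0 x1 x2 x3 x4 x12 E01 E02 E04 E43 /negbTE N12 /negbTE N13
  /negbTE N14 /negbTE N23 /negbTE N24 /negbTE N03.
have adj i j : e (map5 x0 x1 x2 x3 x4 i) (map5 x0 x1 x2 x3 x4 j) = fork i j.
  case: i j => [[|[|[|[|[|//]]]]] ?] [[|[|[|[|[|//]]]]] ?];
  rewrite /map5 /fork /rel_of_edges /= ?e_irr //;
  first [by rewrite ?E01 ?E02 ?E04 ?E43 ?N12 ?N13 ?N14 ?N23 ?N24 ?N03
        |by rewrite e_sym ?E01 ?E02 ?E04 ?E43 ?N12 ?N13 ?N14 ?N23 ?N24 ?N03].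
apply: ffree; exists (map5 x0 x1 x2 x3 x4); split => //.
apply: (pattern_injective adj).
case=> [[|[|[|[|[|//]]]]] ?] [[|[|[|[|[|//]]]]] ?] //= ij rows.
all: move: (rows (inord 0)) (rows (inord 1)) (rows (inord 2)).
all: move: (rows (inord 3)) (rows (inord 4)).
all: by rewrite /fork /rel_of_edges /= ?inordK // eq_sym.
Qed.

Lemma cocricket_free_of : free_of e cocricket -> cocricket_free.
Proof.
move=> cfree a b c d z cd Eab Eac Ead Ebc Ebd /negbTE Ncd
  /negbTE Nza /negbTE Nzb /negbTE Nzc /negbTE Nzd.
have adj i j : e (map5 a b c d z i) (map5 a b c d z j) = cocricket i j.
  case: i j => [[|[|[|[|[|//]]]]] ?] [[|[|[|[|[|//]]]]] ?];
  rewrite /map5 /cocricket /rel_of_edges /= ?e_irr //;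
  first [by rewrite ?Eab ?Eac ?Ead ?Ebc ?Ebd ?Ncd ?Nza ?Nzb ?Nzc ?Nzd
        |by rewrite e_sym ?Eab ?Eac ?Ead ?Ebc ?Ebd ?Ncd ?Nza ?Nzb ?Nzc ?Nzd].
apply: cfree; exists (map5 a b c d z); split => //.
apply: (pattern_injective adj).
case=> [[|[|[|[|[|//]]]]] ?] [[|[|[|[|[|//]]]]] ?] //= ij rows.
all: move: (rows (inord 0)) (rows (inord 1)) (rows (inord 2)).
all: move: (rows (inord 3)) (rows (inord 4)).
all: by rewrite /cocricket /rel_of_edges /= ?inordK // eq_sym.
Qed.

Definition diamond_free (S : {set T}) : Prop := forall a b c d,
  a \in S -> b \in S -> c \in S -> d \in S -> c != d ->
  e a b -> e a c -> e a d -> e b c -> e b d -> e c d.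

Lemma diamond_free_sub (S S' : {set T}) :
  S' \subset S -> diamond_free S -> diamond_free S'.
Proof.
by move=> /subsetP sS dS a b c d /sS aS /sS bS /sS cS /sS dS'; apply: dS.
Qed.

Lemma diamond_free_anticomplete (S : {set T}) z :
  cocricket_free -> {in S, forall y, ~~ e z y} -> diamond_free S.
Proof.
move=> cfree zS a b c d aS bS cS dS cd ab ac ad bc bd; apply/negPn/negP => ncd.
by apply: (cfree a b c d z); rewrite ?zS.
Qed.

Definition triangle_free (S : {set T}) : Prop := forall p q r,
  p \in S -> q \in S -> r \in S -> e p q -> e q r -> e p r -> False.

Lemma common_nbhd_clique (S : {set T}) a b :
  diamond_free S -> a \in S -> b \in S -> e a b ->
  is_clique e (nbhd S a :&: (b |: nbhd S b)).
Proof.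
move=> dS aS bS ab.
apply/forall_inP => u; rewrite !inE => /andP [/andP [uS au] bu].
apply/forall_inP => v; rewrite !inE => /andP [/andP [vS av] bv].
apply/implyP => uv.
case/orP: bu => [/eqP ub|/andP [_ bu]]; case/orP: bv => [/eqP vb|/andP [_ bv]].
- by rewrite ub vb eqxx in uv.
- by rewrite ub.
- by rewrite vb e_sym.
- exact: (dS a b u v).
Qed.

Lemma many_nbrs_outside (S : {set T}) w a b :
  diamond_free S -> clique_bound S w.+1 -> a \in S -> b \in S -> e a b ->
  w.*2 < #|nbhd S a| -> w < #|nbhd S a :\: (b |: nbhd S b)|.
Proof.
move=> dS cbS aS bS ab deg.
have common : #|nbhd S a :&: (b |: nbhd S b)| <= w.
  apply: (nbhd_clique_bound cbS aS (subsetIl _ _)).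
  exact: common_nbhd_clique dS aS bS ab.
have := cardsID (b |: nbhd S b) (nbhd S a); rewrite -addnn in deg; lia.
Qed.

(* Whichever of s1, s2 the vertex z sees, some fork
   appears. *)
Lemma triangle_config_fork x q1 q2 s1 s2 z :
  fork_free -> e x q1 -> e x q2 -> e q1 q2 ->
  e x s1 -> e x s2 -> s1 != s2 -> ~~ e s1 s2 ->
  ~~ e q1 s1 -> ~~ e q1 s2 -> ~~ e q2 s1 -> ~~ e q2 s2 ->
  e q1 z -> ~~ e x z -> ~~ e q2 z -> False.
Proof.
move=> ffree xq1 xq2 q12 xs1 xs2 s12 ns12 nq1s1 nq1s2 nq2s1 nq2s2 q1z nxz nq2z.
have sees s s' : s != s' -> e x s -> e x s' -> ~~ e s s' ->
    ~~ e q1 s -> ~~ e q1 s' -> ~~ e q2 s -> ~~ e q2 s' -> e z s.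
  move=> ss' xs xs' nss' nq1s nq1s' nq2s nq2s'; apply/negPn/negP => nzs.
  have q2s : q2 != s by apply: contraNneq nq1s => <-.
  have nsz : ~~ e s z by rewrite e_sym.
  case: (boolP (e z s')) => [zs'|nzs'].
  + by apply: (ffree x q2 s z s'); rewrite // e_sym.
  + by apply: (ffree x s s' z q1); rewrite // 1?e_sym.
have zs1 := sees s1 s2 s12 xs1 xs2 ns12 nq1s1 nq1s2 nq2s1 nq2s2.
have zs2 : e z s2 by apply: (sees s2 s1); rewrite // 1?eq_sym 1?e_sym.
by apply: (ffree z s1 s2 q2 q1); rewrite // 1?e_sym.
Qed.

Lemma high_degree_triangle_free (S : {set T}) w :
  fork_free -> diamond_free S -> clique_bound S w.+1 ->
  {in S, forall v, w.*2 < #|nbhd S v|} -> triangle_free S.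
Proof.
move=> ffree dS bS deg x q1 q2 xS q1S q2S xq1 q12 xq2.
set R := nbhd S x :\: (q1 |: nbhd S q1).
have wR : w < #|R| by apply: many_nbrs_outside; rewrite ?deg.
have /not_clique_pair [s1 [s2 [s1R s2R s12 ns12]]] : ~~ is_clique e R.
  apply: contraL wR => cR; rewrite -leqNgt.
  exact: nbhd_clique_bound bS xS (subsetDl _ _) cR.
have inR s : s \in R -> [/\ e x s, ~~ e q1 s & ~~ e q2 s].
  rewrite !inE negb_or => /andP [/andP [sq1 nq1s] /andP [sS xs]].
  have nq1s' : ~~ e q1 s by apply: contra nq1s => ->; rewrite sS.
  split => //; apply: contra nq1s' => q2s.
  by apply: (dS x q2 q1 s); rewrite // 1?eq_sym // e_sym.
have [xs1 nq1s1 nq2s1] := inR s1 s1R.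
have [xs2 nq1s2 nq2s2] := inR s2 s2R.
have /set0Pn [z] : nbhd S q1 :\: (x |: nbhd S x) != set0.
  rewrite -card_gt0.
  apply: leq_ltn_trans (many_nbrs_outside dS bS _ _ _ _) => //.
  - by rewrite e_sym.
  - by rewrite deg.
rewrite !inE negb_or => /andP [/andP [zx nxz] /andP [zS q1z]].
have nxz' : ~~ e x z by apply: contra nxz => ->; rewrite zS.
have nq2z : ~~ e q2 z.
  apply: contra nxz' => q2z.
  by apply: (dS q1 q2 x z); rewrite // 1?eq_sym // e_sym.
exact: (triangle_config_fork ffree xq1 xq2 q12 xs1 xs2 s12 ns12
         nq1s1 nq1s2 nq2s1 nq2s2 q1z nxz' nq2z).
Qed.

Section BipartiteComponent.

(* Let A, B, C be the vertices of S at distance 1, 2, 3 from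
   x.  Then {x} and B, and A and C, are independent, and no edge of S leaves
   {x} u A u B u C: the component of x is bipartite. *)
Variables (S : {set T}) (x : T).
Hypotheses (ffree : fork_free) (tfree : triangle_free S).
Hypotheses (xS : x \in S) (deg3 : 2 < #|nbhd S x|).

Let A := nbhd S x.
Let B := [set y in S | [&& y != x, y \notin A & [exists u in A, e u y]]].
Let C :=
  [set z in S | [&& z != x, z \notin A, z \notin B & [exists y in B, e y z]]].

Lemma inA y : (y \in A) = (y \in S) && e x y.
Proof. exact: in_nbhd. Qed.

Lemma inB y :
  (y \in B) = [&& y \in S, y != x, y \notin A & [exists u in A, e u y]].
Proof. by rewrite inE. Qed.

Lemma inC z :
  (z \in C) =
  [&& z \in S, z != x, z \notin A, z \notin B & [exists y in B, e y z]].
Proof. by rewrite [z \in C]inE. Qed.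

Lemma A_independent : independent A.
Proof.
move=> p q; rewrite !inA => /andP [pS xp] /andP [qS xq].
by apply/negP => pq; apply: (tfree xS pS qS xp pq xq).
Qed.

Lemma A_nbrs a v : a \in A -> v \in S -> e a v -> (v == x) || (v \in B).
Proof.
move=> aA vS av; case: eqP => //= /eqP vx; rewrite inB vS vx /=.
apply/andP; split; first by apply: contraL av => vA; apply: A_independent.
by apply/exists_inP; exists a.
Qed.

(* A vertex at distance 2 misses at most one neighbour of x, else there is a
   fork centred at x. *)
Lemma B_misses_one y a b :
  y \in B -> a \in A -> b \in A -> a != b -> e y a || e y b.
Proof.
rewrite inB => /and4P [yS _ yA /exists_inP [u uA uy]] aA bA ab.
apply/negPn/negP; rewrite negb_or => /andP [nya nyb].
have nxy : ~~ e x y by apply: contra yA => xy; rewrite inA yS.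
move: (aA) (bA) (uA); rewrite !inA => /andP [_ xa] /andP [_ xb] /andP [_ xu].
apply: (@ffree x a b y u) => //; try exact: A_independent; by rewrite e_sym.
Qed.

Lemma B_two_nbrs y :
  y \in B -> exists a b, [/\ a \in A, b \in A, a != b, e y a & e y b].
Proof.
move=> yB; set N := [set a | e y a].
have missed : #|A :\: N| <= 1.
  apply/card_le1_eqP => b a; rewrite !in_setD ![_ \in N]inE.
  move=> /andP [nyb bA] /andP [nya aA].
  apply/eqP/negPn/negP => /(B_misses_one yB aA bA).
  by rewrite (negbTE nya) (negbTE nyb).
have : 1 < #|A :&: N| by have := cardsID N A; have := deg3; rewrite -/A; lia.
case/card_gt1P => a [b]; rewrite !in_setI ![_ \in N]inE.
by move=> -[/andP [aA ya] /andP [bA yb] ab]; exists a, b.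
Qed.

Lemma B_independent : independent B.
Proof.
move=> y y' yB y'B; apply/negP => yy'.
have [a [b [aA bA ab ya yb]]] := B_two_nbrs yB.
move: (yB) (y'B) (aA) (bA); rewrite !inB !inA.
move=> /and4P [yS _ _ _] /and4P [y'S _ _ _] /andP [aS _] /andP [bS _].
case/orP: (B_misses_one y'B aA bA ab) => [y'a|y'b].
- exact: (tfree yS y'S aS yy' y'a ya).
- exact: (tfree yS y'S bS yy' y'b yb).
Qed.

Lemma B_nbrs y v : y \in B -> v \in S -> e y v -> (v \in A) || (v \in C).
Proof.
move=> yB vS yv; move: (yB); rewrite inB => /and4P [yS _ yA _].
case: (boolP (v \in A)) => //= vA.
rewrite inC vS vA /=; apply/and3P; split.
- by apply: contraNneq yA => vx; rewrite inA yS -vx e_sym.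
- by apply: contraL yv => vB; apply: B_independent.
- by apply/exists_inP; exists y.
Qed.

(* A vertex at distance 3 has all its neighbours at distance 2, else there is
   a fork centred at one of its neighbours in B. *)
Lemma C_nbrs z q : z \in C -> q \in S -> e z q -> q \in B.
Proof.
rewrite inC => /and5P [zS zx zA zB /exists_inP [y yB yz]] qS zq.
apply/negPn/negP => qB.
have qx : q != x by apply: contraNneq zA => qx; rewrite inA zS -qx e_sym.
have nA v a : v \in S -> v != x -> v \notin B -> a \in A -> ~~ e a v.
  move=> vS vx vB aA; apply/negP => /(A_nbrs aA vS).
  by rewrite (negbTE vx) (negbTE vB).
have [a [b [aA bA ab ya yb]]] := B_two_nbrs yB.
have yS : y \in S by move: yB; rewrite inB => /and4P [].
have nyq : ~~ e y q by apply/negP => yq; apply: (tfree yS zS qS yz zq yq).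
by apply: (@ffree y a b q z) => //; first [exact: A_independent | exact: nA].
Qed.

Lemma C_independent : independent C.
Proof.
move=> z z' zC z'C; apply/negP => zz'.
have := C_nbrs zC _ zz'; move: z'C; rewrite inC => /and5P [z'S _ _ z'B _].
by rewrite (negbTE z'B) => /(_ z'S).
Qed.

Let P := x |: B.
Let Q := A :|: C.

Lemma even_independent : independent P.
Proof.
move=> p q; rewrite !in_setU1.
have xB y : y \in B -> ~~ e x y.
  by rewrite inB => /and4P [yS _ yA _]; apply: contra yA => xy; rewrite inA yS.
case/orP => [/eqP ->|pB]; case/orP => [/eqP ->|qB].
- by rewrite e_irr.
- exact: xB.
- by rewrite e_sym xB.
- exact: B_independent.
Qed.

Lemma odd_independent : independent Q.
Proof.
have AC a c : a \in A -> c \in C -> ~~ e a c.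
  move=> aA; rewrite inC => /and5P [cS cx _ cB _].
  by apply/negP => /(A_nbrs aA cS); rewrite (negbTE cx) (negbTE cB).
move=> p q; rewrite !in_setU.
case/orP => [pA|pC]; case/orP => [qA|qC].
- exact: A_independent.
- exact: AC.
- by rewrite e_sym AC.
- exact: C_independent.
Qed.

Lemma ball_closed : closed_in S (P :|: Q).
Proof.
move=> p q; rewrite !in_setU in_set1 -!orbA => /or4P [/eqP ->|pB|pA|pC] qS pq.
- by rewrite inA qS pq !orbT.
- by case/orP: (B_nbrs pB qS pq) => ->; rewrite !orbT.
- by rewrite in_set1; case/orP: (A_nbrs pA qS pq) => ->; rewrite ?orbT.
- by rewrite (C_nbrs pC qS pq) orbT.
Qed.

Lemma bipartite_component :
  exists X : {set T}, [/\ x \in X, closed_in S X & colourable_on X 2].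
Proof.
exists (P :|: Q); split; first by rewrite !inE eqxx.
  exact: ball_closed.
exact: colourable_on_bipartite even_independent odd_independent.
Qed.

End BipartiteComponent.

(* A fork-free, diamond-free S with cliques of size at most w + 1 is
   (2w + 1)-colourable: either some vertex has degree at most 2w and is
   coloured greedily, or S is triangle-free and the bipartite component of any
   vertex is split off. *)
Lemma fork_diamond_free_colourable (S : {set T}) w :
  fork_free -> diamond_free S -> clique_bound S w.+1 ->
  colourable_on S w.*2.+1.
Proof.
move=> ffree; elim: {S}_.+1 {-2}S (ltnSn #|S|) => // n IH S Sn dS bS.
have IHsub (S' : {set T}) : S' \proper S -> colourable_on S' w.*2.+1.
  move=> ltS'; have sS' := proper_sub ltS'; apply: IH.
  - exact: leq_trans (proper_card ltS') Sn.
  - exact: diamond_free_sub dS.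
  - exact: clique_bound_sub bS.
have [/exists_inP [v vS low]|high] :=
  boolP [exists v in S, #|nbhd S v| <= w.*2].
  by apply: colourable_on_greedy vS _ (IHsub _ (properD1 vS)); rewrite ltnS.
have deg : {in S, forall v, w.*2 < #|nbhd S v|}.
  by move=> v vS; move/exists_inPn: high => /(_ v vS); rewrite ltnNge.
have [->|[x xS]] := set_0Vmem S; first exact: colourable_on0.
case: w IHsub bS deg {high IH} => [|w] IHsub bS deg.
  have /set0Pn [y yN] : nbhd S x != set0 by rewrite -card_gt0 deg.
  have := nbhd_clique_bound bS xS _ (clique1 y); rewrite cards1 sub1set.
  by move=> /(_ yN).
have tS := high_degree_triangle_free ffree dS bS deg.
have deg3 : 2 < #|nbhd S x| by apply: leq_ltn_trans (deg x xS); rewrite doubleS.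
have [X [xX closedX colX]] := bipartite_component ffree tS xS deg3.
apply: colourable_on_split closedX _ (IHsub _ _).
  by apply: colourable_on_sub (subxx _) _ colX; rewrite doubleS.
by apply/properP; split; [exact: subsetDl | exists x; rewrite // inE xX].
Qed.

(* Pick a in S: its neighbourhood
   has cliques of size at most w - 1 (induction), while a together with its
   non-neighbours is diamond-free, hence (2w - 1)-colourable; and
   (w - 1)^2 + (2w - 1) = w^2. *)
Lemma fork_cocricket_free_colourable (S : {set T}) w :
  fork_free -> cocricket_free -> clique_bound S w -> colourable_on S (w ^ 2).
Proof.
move=> ffree cfree; elim: w S => [|w IH] S bS.
  by rewrite (clique_bound0 bS); apply: colourable_on0.
have [->|[a aS]] := set_0Vmem S; first exact: colourable_on0.
have colN : colourable_on (nbhd S a) (w ^ 2).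
  by apply: IH => K KN cK; apply: nbhd_clique_bound bS aS KN cK.
set R := S :\: (a |: nbhd S a).
have antiR : {in R, forall y, ~~ e a y}.
  move=> y; rewrite !inE negb_or => /andP [/andP [_ nay] yS].
  by rewrite yS in nay.
have colR : colourable_on R w.*2.+1.
  apply: fork_diamond_free_colourable ffree _ (clique_bound_sub _ bS).
    exact: diamond_free_anticomplete cfree antiR.
  exact: subsetDl.
have colaR : colourable_on (a |: R) w.*2.+1.
  apply: colourable_on_greedy (setU11 a R) _ _; last first.
    by rewrite setU1K // !inE eqxx.
  rewrite (_ : nbhd _ a = set0) ?cards0 //; apply/setP => y.
  rewrite in_set0 in_nbhd in_setU1; case/boolP: (y == a) => [/eqP ->|_ /=].
    by rewrite e_irr andbF.
  by case: (boolP (y \in R)) => //= /antiR /negbTE.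
apply: colourable_on_sub (colourable_on_union colN colaR); last first.
  by rewrite -addn1 -addnn; lia.
by apply/subsetP => y yS; rewrite !inE yS; case: (y == a); case: (e a y).
Qed.

End Graph.

Theorem corollary3p18 (T : finType) (e : rel T) :
  simple_graph e -> free_of e fork -> free_of e cocricket ->
  forall chi : nat, is_chromatic_number e chi ->
  chi <= clique_number e ^ 2.
Proof.
move=> [e_sym e_irr] no_fork no_cocricket chi [_ chi_min].
have ffree := fork_free_of e_sym e_irr no_fork.
have cfree := cocricket_free_of e_sym e_irr no_cocricket.
have [c [c_lt c_proper]] := fork_cocricket_free_colourable e_sym e_irr
  ffree cfree (@clique_bound_number _ e).
apply: chi_min; exists (fun x => Ordinal (c_lt x (in_setT x))) => x y exy.
exact: c_proper (in_setT x) (in_setT y) exy.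
Qed.
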